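(* Let $k\ge1$. Assume that $R_0,\dots,R_k$ (from BCG) have full column rank, that $\mu$ is not an eigenvalue of $T_1,\dots,T_k$, and that $\Delta^{(\mu)}_1,\dots,\Delta^{(\mu)}_{k+1}$ are nonsingular. Define $\Upsilon^{(\mu)}_j=\Phi_j^{-1}(\Delta^{(\mu)}_{j+1})^{-1}\Phi_j$ and $\Theta^{(\mu)}_j=(R_j^TR_j)\Upsilon^{(\mu)}_j$ for $j=0,\dots,k$. Then $\Upsilon^{(\mu)}_0=\mu^{-1}I_m$ and $$\Upsilon^{(\mu)}_k=\big[\mu(\Upsilon^{(\mu)}_{k-1}-\Upsilon_{k-1})+\Xi_k\big]^{-1}(\Upsilon^{(\mu)}_{k-1}-\Upsilon_{k-1}) =\big[\mu(\Theta^{(\mu)}_{k-1}-\Theta_{k-1})+R_k^TR_k\big]^{-1}(\Theta^{(\mu)}_{k-1}-\Theta_{k-1}),$$ where all displayed inverses exist.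
   Context: Let $A\in\mathbb{R}^{n\times n}$ be symmetric positive definite, let $B,X_0\in\mathbb{R}^{n\times m}$, and let $X=A^{-1}B$. The block conjugate gradient (BCG) algorithm sets $R_0=B-AX_0$, $P_0=R_0$, and for $k=1,2,\dots$: $\Upsilon_{k-1}=(P_{k-1}^TAP_{k-1})^{-1}(R_{k-1}^TR_{k-1})$, $X_k=X_{k-1}+P_{k-1}\Upsilon_{k-1}$, $R_k=R_{k-1}-AP_{k-1}\Upsilon_{k-1}$, $\Xi_k=(R_{k-1}^TR_{k-1})^{-1}(R_k^TR_k)$, $P_k=R_k+P_{k-1}\Xi_k$. Define $\mathfrak{E}_k=(X-X_k)^TA(X-X_k)$ and $\Theta_k=(R_k^TR_k)\Upsilon_k$. The block Lanczos algorithm below is started from the same $R_0=B-AX_0$. Let $A\in\mathbb{R}^{n\times n}$ be symmetric positive definite and $R_0\in\mathbb{R}^{n\times m}$ of full column rank. The block Lanczos algorithm started from $R_0$ is: $V_0=0$; $V_1\Gamma_0=R_0$ is a QR factorization ($V_1\in\mathbb{R}^{n\times m}$ with orthonormal columns, $\Gamma_0\in\mathbb{R}^{m\times m}$ upper triangular); for $k=1,2,\dots$: $W=AV_k-V_{k-1}\Gamma_{k-1}^T$, $\Omega_k=V_k^TW$, and $V_{k+1}\Gamma_k=W-V_k\Omega_k$ is a QR factorization. It is assumed that for all indices considered the block Krylov subspace $\mathrm{colspan}\{R_0,AR_0,\dots,A^{j-1}R_0\}$ has dimension $jm$, so that every $\Gamma_j$ is nonsingular and $V_i^TV_j=\delta_{ij}I_m$.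 Put $\mathcal V_k=(V_1,\dots,V_k)\in\mathbb{R}^{n\times km}$ and let $T_k\in\mathbb{R}^{km\times km}$ be the symmetric block tridiagonal matrix with diagonal blocks $\Omega_1,\dots,\Omega_k$, subdiagonal blocks $\Gamma_1,\dots,\Gamma_{k-1}$ and superdiagonal blocks $\Gamma_1^T,\dots,\Gamma_{k-1}^T$; one has $A\mathcal V_k=\mathcal V_kT_k+V_{k+1}\Gamma_kE_k^T$ and $T_k=\mathcal V_k^TA\mathcal V_k$ is symmetric positive definite. Define $\Delta_1=\Omega_1$, $\Delta_j=\Omega_j-\Gamma_{j-1}\Delta_{j-1}^{-1}\Gamma_{j-1}^T$ ($j\ge2$) (the diagonal blocks of the block $LDL^T$-type factorization of $T_k$; they are symmetric positive definite), $\Pi_j=\Gamma_j\Delta_j^{-1}$, $\Phi_0=\Gamma_0$ and $\Phi_j=\Pi_j\Phi_{j-1}$. Let $E_j=e_j\otimes I_m\in\mathbb{R}^{km\times m}$; for $M\in\mathbb{R}^{km\times km}$, $[M]_{i,j}$ denotes its $(i,j)$ block of size $m\times m$, and for $Y\in\mathbb{R}^{km\times m}$, $[Y]_j$ denotes its $j$th $m\times m$ block. Shifted quantities: for $\mu\in\mathbb{R}$ let $\overline\Delta^{(\mu)}_1=\Omega_1-\mu I_m$ and $\overline\Delta^{(\mu)}_{j+1}=\Omega_{j+1}-\mu I_m-\Gamma_j(\overline\Delta^{(\mu)}_j)^{-1}\Gamma_j^T$ (the diagonal blocks of the analogous factorization of $T_k-\mu I$). For $k\ge1$ let $\Omega^{(\mu)}_{k+1}=\mu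 I_m+\Gamma_k[(T_k-\mu I)^{-1}]_{k,k}\Gamma_k^T$ and let $T^{(\mu)}_{k+1}$ be $T_{k+1}$ with its last diagonal block $\Omega_{k+1}$ replaced by $\Omega^{(\mu)}_{k+1}$. Put $\Delta^{(\mu)}_1=\mu I_m$ and, for $k\ge1$, $\Delta^{(\mu)}_{k+1}=\Omega^{(\mu)}_{k+1}-\Gamma_k\Delta_k^{-1}\Gamma_k^T$ (the last diagonal block of the factorization of $T^{(\mu)}_{k+1}$). *)

From HB Require Import structures.
From mathcomp Require Import all_boot all_order all_algebra.
Set Implicit Arguments. Unset Strict Implicit. Unset Printing Implicit Defensive.
Import Order.TTheory GRing.Theory Num.Theory.
Local Open Scope ring_scope.

Section BCG_Lanczos.
Variable R : realFieldType.
Variables n m : nat.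

Definition sym_posdef (A : 'M[R]_n) : Prop :=
  A^T = A /\ forall x : 'cV[R]_n, x != 0 -> 0 < (x^T *m A *m x) ord0 ord0.

Definition upper_trig (G : 'M[R]_m) : bool := is_trig_mx G^T.

Variables (A : 'M[R]_n) (B X0 : 'M[R]_(n, m)).

Fixpoint bcg (k : nat) : 'M[R]_(n, m) * 'M[R]_(n, m) * 'M[R]_(n, m) :=
  match k with
  | 0 => (X0, B - A *m X0, B - A *m X0)
  | k'.+1 =>
    let: (X, Rk, P) := bcg k' in
    let Ups := invmx (P^T *m A *m P) *m (Rk^T *m Rk) in
    let X' := X + P *m Ups in
    let R' := Rk - A *m P *m Ups in
    let Xi := invmx (Rk^T *m Rk) *m (R'^T *m R') in
    (X', R', R' + P *m Xi)
  end.

Definition bcgX k := (bcg k).1.1.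
Definition bcgR k := (bcg k).1.2.
Definition bcgP k := (bcg k).2.
Definition bcgUps k := invmx ((bcgP k)^T *m A *m bcgP k) *m ((bcgR k)^T *m bcgR k).
(* Xi_k = (R_{k-1}^T R_{k-1})^{-1} (R_k^T R_k), for k >= 1 *)
Definition bcgXi k :=
  invmx ((bcgR k.-1)^T *m bcgR k.-1) *m ((bcgR k)^T *m bcgR k).
Definition bcgTheta k := ((bcgR k)^T *m bcgR k) *m bcgUps k.

Definition krylov (R0 : 'M[R]_(n, m)) (j : nat) :=
  \mxrow_(p < j) (A ^+ p *m R0).

Variables (V : nat -> 'M[R]_(n, m)) (Gam Om : nat -> 'M[R]_m).

(* the Lanczos relations started from R0, for the steps 1..k (QR factors
   Gam 0 .. Gam k, blocks V 1 .. V (k+1), Om 1 .. Om k) *)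
Definition lanczos_upto (R0 : 'M[R]_(n, m)) (k : nat) : Prop :=
  [/\ V 0 = 0,
      V 1 *m Gam 0 = R0, (V 1)^T *m V 1 = 1%:M, upper_trig (Gam 0) &
      forall j, (1 <= j <= k)%N ->
        let W := A *m V j - V j.-1 *m (Gam j.-1)^T in
        [/\ Om j = (V j)^T *m W,
            V j.+1 *m Gam j = W - V j *m Om j,
            (V j.+1)^T *m V j.+1 = 1%:M & upper_trig (Gam j)]].

(* block (i,j) (0-based) of T_k *)
Definition Tblk (i j : nat) : 'M[R]_m :=
  if i == j then Om i.+1
  else if i == j.+1 then Gam i
  else if j == i.+1 then (Gam j)^T
  else 0.

Definition Tk (k : nat) : 'M[R]_(\sum_(i < k) m) :=
  \mxblock_(i < k, j < k) Tblk i j.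

(* Delta_j, j >= 1 (Delta 0 is an unused dummy) *)
Fixpoint Delta (j : nat) : 'M[R]_m :=
  match j with
  | 0 => 0
  | j'.+1 => if j' is 0 then Om 1
             else Om j - Gam j' *m invmx (Delta j') *m (Gam j')^T
  end.

Fixpoint Phi (j : nat) : 'M[R]_m :=
  match j with
  | 0 => Gam 0
  | j'.+1 => Gam j *m invmx (Delta j) *m Phi j'
  end.

Variable mu : R.

(* Omega^{(mu)}_{k+1} for k = k'.+1 >= 1 :
   mu I + Gamma_k [(T_k - mu I)^{-1}]_{k,k} Gamma_k^T *)
Definition OmMu (k' : nat) : 'M[R]_m :=
  mu%:M + Gam k'.+1 *m
    submxblock (invmx (Tk k'.+1 - mu%:M)) ord_max ord_max *m (Gam k'.+1)^T.

Definition DeltaMu (j : nat) : 'M[R]_m :=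
  match j with
  | 0 => 0
  | 1 => mu%:M
  | k'.+2 => OmMu k' - Gam k'.+1 *m invmx (Delta k'.+1) *m (Gam k'.+1)^T
  end.

Definition UpsMu (j : nat) : 'M[R]_m :=
  invmx (Phi j) *m invmx (DeltaMu j.+1) *m Phi j.

Definition ThetaMu (j : nat) : 'M[R]_m :=
  ((bcgR j)^T *m bcgR j) *m UpsMu j.

End BCG_Lanczos.

From HB Require Import structures.
From mathcomp Require Import all_boot all_order all_algebra.
Import Order.TTheory GRing.Theory Num.Theory.
Local Open Scope ring_scope.
Set Implicit Arguments. Unset Strict Implicit. Unset Printing Implicit Defensive.

(* BCG is block Lanczos in other coordinates.  With the [A]-conjugate blocks
   [Q_1 = V_1], [Q_{j+1} = V_{j+1} - Q_j Delta_j^{-1} Gamma_j^T], induction on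
   [j] gives [R_j = (-1)^j V_{j+1} Phi_j] and [P_j = (-1)^j Q_{j+1} Phi_j], hence
   [Upsilon_j = Phi_j^{-1} Delta_{j+1}^{-1} Phi_j] and
   [Xi_{j+1} = (Phi_j^T Phi_j)^{-1} Phi_{j+1}^T Phi_{j+1}].  Block Gaussian
   elimination on [T_k - mu I] shows that the last diagonal block of its
   inverse is the inverse of its last pivot [Dbar_k]; therefore
   [Delta^{(mu)}_{k+1} = mu I + Gamma_k (Dbar_k^{-1} - Delta_k^{-1}) Gamma_k^T]
   and [Dbar_k = Delta_k - Delta^{(mu)}_k].  For
   [U = Upsilon^{(mu)}_{k-1} - Upsilon_{k-1}] this yields
   [mu U + Xi_k = U Phi_k^{-1} Delta^{(mu)}_{k+1} Phi_k], which is the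
   recurrence; the [Theta] form follows on multiplying by
   [R_{k-1}^T R_{k-1} = Phi_{k-1}^T Phi_{k-1}]. *)

Lemma trmxD (R : pzRingType) p q (M N : 'M[R]_(p, q)) : (M + N)^T = M^T + N^T.
Proof. exact: linearD. Qed.

Lemma trmxB (R : pzRingType) p q (M N : 'M[R]_(p, q)) : (M - N)^T = M^T - N^T.
Proof. exact: linearB. Qed.

Lemma trmxZ (R : pzRingType) p q c (M : 'M[R]_(p, q)) : (c *: M)^T = c *: M^T.
Proof. exact: linearZ. Qed.

Lemma signr_mul_self (R : pzRingType) j : (-1) ^+ j * (-1) ^+ j = 1 :> R.
Proof. by rewrite -exprD addnn -mul2n exprM sqrrN !expr1n. Qed.

Lemma trmx_signr_mul (R : comPzRingType) j p q r (M : 'M[R]_(p, q)) (N : 'M[R]_(p, r)) :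
  ((-1) ^+ j *: M)^T *m ((-1) ^+ j *: N) = M^T *m N.
Proof.
by rewrite trmxZ -scalemxAl -scalemxAr scalerA signr_mul_self scale1r.
Qed.

Lemma mulmx1_invmx (R : comUnitRingType) p (X Y : 'M[R]_p) :
  X *m Y = 1%:M -> invmx X = Y.
Proof.
move=> XY; have [uX _] := mulmx1_unit XY.
by rewrite -[invmx X]mulmx1 -XY mulmxA mulVmx // mul1mx.
Qed.

Lemma invmxM (R : comUnitRingType) p (X Y : 'M[R]_p) :
  X \in unitmx -> Y \in unitmx -> invmx (X *m Y) = invmx Y *m invmx X.
Proof.
move=> uX uY; apply: mulmx1_invmx.
by rewrite mulmxA -(mulmxA X) mulmxV // mulmx1 mulmxV.
Qed.

Lemma noneigen_unitmx (R : fieldType) p (M : 'M[R]_p) (a : R) :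
  ~~ eigenvalue M a -> M - a%:M \in unitmx.
Proof. by rewrite /eigenvalue /eigenspace negbK kermx_eq0 row_free_unit. Qed.

(* [Q^T V = 1] forces [Q] to have full column rank. *)
Lemma posdef_congr_unitmx (R : realFieldType) n m (A : 'M[R]_n)
    (Q V : 'M[R]_(n, m)) :
  (forall x : 'cV_n, x != 0 -> 0 < (x^T *m A *m x) ord0 ord0) ->
  Q^T *m V = 1%:M -> Q^T *m A *m Q \in unitmx.
Proof.
move=> Apd QV; rewrite -row_free_unit -kermx_eq0; apply/negP => /negP nz.
have [x /sub_kermxP xQAQ x_neq0] := rowV0Pn nz.
have VQ : V^T *m Q = 1%:M by rewrite -[_ *m Q]trmxK trmx_mul trmxK QV trmx1.
have Qx_neq0 : Q *m x^T != 0.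
  apply: contra x_neq0 => /eqP Qx0; apply/eqP.
  by rewrite -[x]trmxK -[x^T]mul1mx -VQ -mulmxA Qx0 mulmx0 trmx0.
have := Apd _ Qx_neq0.
by rewrite trmx_mul trmxK mulmxA -(mulmxA x) -(mulmxA x) xQAQ mul0mx mxE ltxx.
Qed.

Section BlockLanczos.
Variables (R : realFieldType) (n m k : nat).
Variables (A : 'M[R]_n) (R0 : 'M[R]_(n, m)).
Variables (V : nat -> 'M[R]_(n, m)) (Gam Om : nat -> 'M[R]_m).
Hypothesis Asym : A^T = A.
Hypothesis LZ : lanczos_upto A V Gam Om R0 k.

Lemma lanczos_V0 : V 0 = 0. Proof. by case: LZ. Qed.
Lemma lanczos_V1 : V 1 *m Gam 0 = R0. Proof. by case: LZ. Qed.
Lemma lanczos_V1_orthonormal : (V 1)^T *m V 1 = 1%:M. Proof. by case: LZ. Qed.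

Lemma lanczos_Om j : (1 <= j <= k)%N ->
  Om j = (V j)^T *m (A *m V j - V j.-1 *m (Gam j.-1)^T).
Proof. by case: LZ => _ _ _ _ H /H []. Qed.

Lemma lanczos_three_term j : (1 <= j <= k)%N ->
  A *m V j = V j.+1 *m Gam j + V j *m Om j + V j.-1 *m (Gam j.-1)^T.
Proof. by case: LZ => _ _ _ _ H /H [] _ -> _ _; rewrite !subrK. Qed.

Lemma lanczos_orthonormal j : (1 <= j <= k)%N -> (V j.+1)^T *m V j.+1 = 1%:M.
Proof. by case: LZ => _ _ _ _ H /H []. Qed.

Definition orthonormal_upto (J : nat) :=
  forall a b, (1 <= a <= J)%N -> (1 <= b <= J)%N ->
  (V a)^T *m V b = if a == b then 1%:M else 0.

Lemma orthonormal_upto_mono J J' :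
  (J' <= J)%N -> orthonormal_upto J -> orthonormal_upto J'.
Proof.
move=> le o a b /andP[a1 aJ] /andP[b1 bJ].
by apply: o; rewrite ?a1 ?b1 (leq_trans _ le).
Qed.

Lemma orthonormal_upto1 : orthonormal_upto 1.
Proof.
move=> a b /andP[a1 a_le1] /andP[b1 b_le1].
have -> : a = 1%N by apply/eqP; rewrite eqn_leq a1 a_le1.
have -> : b = 1%N by apply/eqP; rewrite eqn_leq b1 b_le1.
exact: lanczos_V1_orthonormal.
Qed.

(* Also covers [V 0 = 0], so indices may range over [0..J]. *)
Lemma orthonormal_upto_ortho J i j : orthonormal_upto J ->
  (i <= J)%N -> (j <= J)%N -> i != j -> (V i)^T *m V j = 0.
Proof.
move=> o iJ jJ ij.
case: i iJ ij => [|i] iJ ij; first by rewrite lanczos_V0 trmx0 mul0mx.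
case: j jJ ij => [|j] jJ ij; first by rewrite lanczos_V0 mulmx0.
by rewrite o ?(negPf ij).
Qed.

Lemma orthonormal_upto_eq J j : orthonormal_upto J -> (1 <= j <= J)%N ->
  (V j)^T *m V j = 1%:M.
Proof. by move=> o jJ; rewrite o ?eqxx. Qed.

(* The symmetry of [A] turns [V_i^T A V_j] into [(A V_i)^T V_j], which the
   three-term recurrence at [i] evaluates. *)
Lemma lanczos_A_ortho j i : (1 <= j <= k)%N -> orthonormal_upto j ->
  (1 <= i < j)%N ->
  (V i)^T *m (A *m V j) = if i.+1 == j then (Gam i)^T else 0.
Proof.
move=> /andP[j1 jk] o /andP[i1 ij].
have ik : (1 <= i <= k)%N by rewrite i1 (leq_trans (ltnW ij)).
have Vij : (V i)^T *m V j = 0 by apply: (orthonormal_upto_ortho o); rewrite ?ltn_eqF // ltnW.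
have Vi1j : (V i.-1)^T *m V j = 0.
  apply: (orthonormal_upto_ortho o) => //; first by rewrite (leq_trans (leq_pred _) (ltnW ij)).
  by rewrite neq_ltn (leq_ltn_trans (leq_pred _) ij).
have VSij : (V i.+1)^T *m V j = if i.+1 == j then 1%:M else 0.
  by rewrite o // j1 leqnn.
rewrite mulmxA -Asym -trmx_mul lanczos_three_term //.
rewrite !trmxD !trmx_mul !mulmxDl -!mulmxA Vij Vi1j VSij !mulmx0 !addr0.
by case: eqP; rewrite ?mulmx1 ?mulmx0.
Qed.

Lemma lanczos_next_ortho j : (1 <= j <= k)%N -> orthonormal_upto j ->
  Gam j \in unitmx -> forall i, (1 <= i <= j)%N -> (V i)^T *m V j.+1 = 0.
Proof.
move=> jk o uG i /andP[i1 ij].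
have [j1 _] := andP jk.
suff : (V i)^T *m V j.+1 *m Gam j = 0.
  by move=> H; rewrite -(mulmxK uG ((V i)^T *m V j.+1)) H mul0mx.
rewrite -mulmxA.
have -> : V j.+1 *m Gam j = A *m V j - V j *m Om j - V j.-1 *m (Gam j.-1)^T.
  by rewrite lanczos_three_term // addrAC addrK addrK.
rewrite !mulmxBr.
have [->|ne] := eqVneq i j.
  rewrite [in X in _ - X - _]mulmxA (orthonormal_upto_eq o) ?j1 ?leqnn // mul1mx lanczos_Om // mulmxBr.
  by rewrite subKr subrr.
have ilt : (i < j)%N by rewrite ltn_neqAle ne ij.
rewrite lanczos_A_ortho ?i1 // mulmxA (mulmxA _ (V j.-1)).
rewrite (orthonormal_upto_ortho o (i:=i) (j:=j)) ?(ltnW ilt) // mul0mx subr0.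
have -> : (V i)^T *m V j.-1 = if i.+1 == j then 1%:M else 0.
  case: eqP => [<-|/eqP ne']; first by rewrite (orthonormal_upto_eq o) ?i1.
  apply: (orthonormal_upto_ortho o) => //; first by rewrite (leq_trans (leq_pred _)).
  by apply: contra ne' => /eqP ->; rewrite prednK // (leq_ltn_trans _ ilt).
by case: eqP => [<-|_]; rewrite ?mul1mx ?mul0mx subrr.
Qed.

Lemma orthonormal_upto_step j : (1 <= j <= k)%N -> orthonormal_upto j ->
  Gam j \in unitmx -> orthonormal_upto j.+1.
Proof.
move=> jk o uG; have [j1 _] := andP jk.
have new := lanczos_next_ortho jk o uG.
move=> a b /andP[a1 aJ] /andP[b1 bJ].
have [ea|na] := eqVneq a j.+1; have [eb|nb] := eqVneq b j.+1.
- by rewrite ea eb eqxx lanczos_orthonormal.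
- rewrite ea (negPf (_ : j.+1 != b)) 1?eq_sym //.
  by rewrite -[LHS]trmxK trmx_mul trmxK new ?trmx0 // b1 -ltnS ltn_neqAle nb bJ.
- by rewrite eb (negPf na) new // a1 -ltnS ltn_neqAle na aJ.
- by apply: o; rewrite ?a1 ?b1 -ltnS ltn_neqAle ?na ?nb.
Qed.

Lemma lanczos_Om_sym j : (1 <= j <= k)%N -> orthonormal_upto j -> (Om j)^T = Om j.
Proof.
move=> jk o; have [j1 _] := andP jk.
rewrite lanczos_Om // mulmxBr [(V j)^T *m (V j.-1 *m _)]mulmxA (orthonormal_upto_ortho o) ?leq_pred //;
  last by rewrite eq_sym neq_ltn ltn_predL j1.
by rewrite mul0mx subr0 !trmx_mul Asym trmxK mulmxA.
Qed.

Local Notation Dl := (Delta Gam Om).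

Lemma DeltaS j : Dl j.+2 = Om j.+2 - Gam j.+1 *m invmx (Dl j.+1) *m (Gam j.+1)^T.
Proof. by []. Qed.

Lemma PhiS j : Phi Gam Om j.+1 = Gam j.+1 *m invmx (Dl j.+1) *m Phi Gam Om j.
Proof. by []. Qed.

Lemma Delta_sym j : (forall i, (1 <= i <= j)%N -> (Om i)^T = Om i) -> (Dl j)^T = Dl j.
Proof.
elim: j => [|[|j] IH] Omsym; first by rewrite trmx0.
  exact: Omsym.
rewrite DeltaS trmxB Omsym ?leqnn // !trmx_mul trmxK trmx_inv IH ?mulmxA //.
by move=> i /andP[i1 ij]; rewrite Omsym // i1 ltnW.
Qed.

(* The block columns [Q_j] of [V_k L_k^{-T}], where [T_k = L_k D_k L_k^T] with
   [D_k = diag(Delta_1, .., Delta_k)]; they are [A]-conjugate. *)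
Fixpoint conj_dir j : 'M[R]_(n, m) :=
  if j is j'.+1 then V j - conj_dir j' *m (Gam j' *m invmx (Dl j'))^T else 0.

Lemma conj_dirS j :
  conj_dir j.+1 = V j.+1 - conj_dir j *m (Gam j *m invmx (Dl j))^T.
Proof. by []. Qed.

Lemma conj_dir1 : conj_dir 1 = V 1.
Proof. by rewrite /= mul0mx subr0. Qed.

Lemma conj_dir_orth J : orthonormal_upto J -> forall j l, (1 <= j <= l)%N -> (l <= J)%N ->
  (conj_dir j)^T *m V l = if j == l then 1%:M else 0.
Proof.
move=> o; elim=> [|j IH] l // /andP[_ jl] lJ.
rewrite /= trmxB trmx_mul trmxK mulmxBl o ?(leq_trans jl) //; last by rewrite (leq_trans _ jl).
case: j IH jl => [|j] IH jl; first by rewrite trmx0 mulmx0 mul0mx subr0.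
by rewrite -mulmxA IH ?(ltnW jl) // (ltn_eqF jl) mulmx0 subr0.
Qed.

Definition pivots_sym_unit j :=
  forall i, (1 <= i < j)%N -> (Dl i)^T = Dl i /\ Dl i \in unitmx.

Lemma pivots_sym_unit_pred j : pivots_sym_unit j.+1 -> pivots_sym_unit j.
Proof. by move=> H i /andP[i1 ij]; apply: H; rewrite i1 ltnW. Qed.

Lemma A_conj_dir j : (1 <= j <= k)%N -> pivots_sym_unit j ->
  A *m conj_dir j = V j *m Dl j + V j.+1 *m Gam j.
Proof.
elim: j => [|[|j] IH] // /andP[_ jk] H.
  by rewrite conj_dir1 lanczos_three_term // lanczos_V0 mul0mx addr0 addrC.
have [sD uD] := H j.+1 (leqnn _).
have IH1 := IH (ltnW jk) (pivots_sym_unit_pred H).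
rewrite conj_dirS mulmxBr mulmxA IH1.
rewrite trmx_mul trmx_inv sD mulmxDl -!mulmxA mulKVmx //.
rewrite (lanczos_three_term (j:=j.+2)) // DeltaS mulmxBr !mulmxA /=.
by rewrite opprD addrA addrK [RHS]addrC addrA.
Qed.

Lemma conj_dir_energy j : (1 <= j <= k)%N -> orthonormal_upto j -> pivots_sym_unit j ->
  (conj_dir j)^T *m A *m conj_dir j = Dl j.
Proof.
case: j => [|[|j]] // /andP[_ jk] o H.
  by rewrite conj_dir1 -mulmxA /= (lanczos_Om (j:=1)) // lanczos_V0 mul0mx subr0.
have [sD uD] := H j.+1 (leqnn _).
have AQ1 := A_conj_dir (j:=j.+1) (ltnW jk) (pivots_sym_unit_pred H).
have eQ : conj_dir j.+2 = V j.+2 - conj_dir j.+1 *m (invmx (Dl j.+1) *m (Gam j.+1)^T).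
  by rewrite conj_dirS trmx_mul trmx_inv sD.
have QV : (conj_dir j.+2)^T *m V j.+2 = 1%:M by rewrite (conj_dir_orth o) ?eqxx ?leqnn.
have QW : (conj_dir j.+1)^T *m (A *m V j.+2 - V j.+1 *m (Gam j.+1)^T) = 0.
  have QA : (conj_dir j.+1)^T *m A = (A *m conj_dir j.+1)^T by rewrite trmx_mul Asym.
  rewrite mulmxBr mulmxA QA AQ1.
  rewrite trmxD !trmx_mul mulmxDl -!mulmxA (orthonormal_upto_ortho o (i:=j.+1)) ?ltn_eqF //.
  rewrite mulmx0 add0r (orthonormal_upto_eq o) ?leqnn // mulmx1 mulmxA (conj_dir_orth o) ?eqxx ?leqnn //.
  by rewrite mul1mx subrr.
rewrite -mulmxA {2}eQ mulmxBr mulmxA AQ1 mulmxDl -!mulmxA mulKVmx //.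
rewrite [X in _ - X]addrC opprD addrA addrAC mulmxBr {1}eQ trmxB mulmxBl.
rewrite -(lanczos_Om (j:=j.+2)) // (trmx_mul (conj_dir j.+1)) -mulmxA QW mulmx0 subr0.
by rewrite mulmxA QV mul1mx DeltaS !mulmxA.
Qed.

End BlockLanczos.

Section BCGLanczos.
Variables (R : realFieldType) (n m k : nat).
Variables (A : 'M[R]_n) (B X0 : 'M[R]_(n, m)).
Variables (V : nat -> 'M[R]_(n, m)) (Gam Om : nat -> 'M[R]_m).
Hypothesis Asym : A^T = A.
Hypothesis Apd : forall x : 'cV_n, x != 0 -> 0 < (x^T *m A *m x) ord0 ord0.
Hypothesis Rrank : forall j, (j <= k)%N -> \rank (bcgR A B X0 j) = m.
Hypothesis LZ : lanczos_upto A V Gam Om (bcgR A B X0 0) k.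

Local Notation Rb := (bcgR A B X0).
Local Notation Pb := (bcgP A B X0).
Local Notation Ub := (bcgUps A B X0).
Local Notation Xb := (bcgXi A B X0).
Local Notation Dl := (Delta Gam Om).
Local Notation Ph := (Phi Gam Om).
Local Notation Q := (conj_dir V Gam Om).

Lemma bcgRS j : Rb j.+1 = Rb j - A *m Pb j *m Ub j.
Proof. by rewrite /bcgUps /bcgR /bcgP /=; case: (bcg A B X0 j) => [[X Rj] P]. Qed.

Lemma bcgPS j : Pb j.+1 = Rb j.+1 + Pb j *m Xb j.+1.
Proof. by rewrite /bcgUps /bcgXi /bcgR /bcgP /=; case: (bcg A B X0 j) => [[X Rj] P]. Qed.

Lemma bcgR_gram (M : 'M[R]_(n, m)) (F : 'M[R]_m) j :
  M^T *m M = 1%:M -> Rb j = (-1) ^+ j *: (M *m F) -> (Rb j)^T *m Rb j = F^T *m F.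
Proof.
by move=> MM ->; rewrite trmx_signr_mul trmx_mul -mulmxA (mulmxA M^T) MM mul1mx.
Qed.

Lemma bcgR_factor_unit j (M : 'M[R]_(n, m)) (F : 'M[R]_m) : (j <= k)%N ->
  Rb j = (-1) ^+ j *: (M *m F) -> F \in unitmx.
Proof.
move=> jk eR; rewrite -row_free_unit /row_free eqn_leq rank_leq_row /=.
rewrite -{1}(Rrank jk) eR (leq_trans (mxrank_scale _ _)) //.
exact: mxrankM_maxr.
Qed.

Lemma bcg_lanczos_step j :
  Rb j = (-1) ^+ j *: (V j.+1 *m Ph j) -> Pb j = (-1) ^+ j *: (Q j.+1 *m Ph j) ->
  Ph j \in unitmx -> Dl j.+1 \in unitmx ->
  (Q j.+1)^T *m A *m Q j.+1 = Dl j.+1 ->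
  (V j.+1)^T *m V j.+1 = 1%:M -> (V j.+2)^T *m V j.+2 = 1%:M ->
  A *m Q j.+1 = V j.+1 *m Dl j.+1 + V j.+2 *m Gam j.+1 ->
  [/\ Ub j = invmx (Ph j) *m invmx (Dl j.+1) *m Ph j,
      Rb j.+1 = (-1) ^+ j.+1 *: (V j.+2 *m Ph j.+1),
      Pb j.+1 = (-1) ^+ j.+1 *: (Q j.+2 *m Ph j.+1) &
      Xb j.+1 = invmx ((Ph j)^T *m Ph j) *m ((Ph j.+1)^T *m Ph j.+1)].
Proof.
move=> eR eP uF uD QAQ VV1 VV2 AQ.
have RR := bcgR_gram VV1 eR.
have uFt : (Ph j)^T \in unitmx by rewrite unitmx_tr.
have eU : Ub j = invmx (Ph j) *m invmx (Dl j.+1) *m Ph j.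
  have PAP : (Pb j)^T *m A *m Pb j = (Ph j)^T *m Dl j.+1 *m Ph j.
    rewrite eP trmxZ -!scalemxAl -scalemxAr scalerA signr_mul_self scale1r.
    by rewrite trmx_mul -QAQ !mulmxA.
  rewrite /bcgUps RR PAP invmxM ?unitmx_mul ?uFt ?uD // invmxM // !mulmxA.
  by rewrite -(mulmxA _ (invmx (Ph j)^T)) mulVmx // mulmx1.
have sgS : (-1) ^+ j.+1 = - (-1) ^+ j :> R by rewrite exprS mulN1r.
have eR1 : Rb j.+1 = (-1) ^+ j.+1 *: (V j.+2 *m Ph j.+1).
  rewrite bcgRS eU eR eP -!scalemxAr -scalemxAl.
  have -> : A *m (Q j.+1 *m Ph j) *m (invmx (Ph j) *m invmx (Dl j.+1) *m Ph j)
      = A *m Q j.+1 *m invmx (Dl j.+1) *m Ph j by rewrite !mulmxA mulmxK.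
  rewrite AQ mulmxDl mulmxDl mulmxK // PhiS !mulmxA sgS.
  by rewrite scalerDr opprD addrA subrr sub0r scaleNr.
have eX : Xb j.+1 = invmx ((Ph j)^T *m Ph j) *m ((Ph j.+1)^T *m Ph j.+1).
  by rewrite /bcgXi -pred_Sn RR (bcgR_gram VV2 eR1).
split => //.
rewrite bcgPS eX eR1 eP -scalemxAl invmxM // (conj_dirS _ _ _ j.+1) sgS.
have -> : Q j.+1 *m Ph j *m (invmx (Ph j) *m invmx ((Ph j)^T) *m ((Ph j.+1)^T *m Ph j.+1))
    = Q j.+1 *m (Gam j.+1 *m invmx (Dl j.+1))^T *m Ph j.+1.
  rewrite !mulmxA (mulmxK uF) [in (Ph j.+1)^T]PhiS (trmx_mul _ (Ph j)).
  by rewrite !mulmxA (mulmxKV uFt).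
move: (Q j.+1 *m _) => Y.
by rewrite mulmxBl scalerBr !scaleNr opprK.
Qed.

Definition bcg_lanczos_inv j := [/\ orthonormal_upto V j.+1,
   forall i, (1 <= i <= j)%N -> (Dl i)^T = Dl i /\ Dl i \in unitmx,
   forall i, (i <= j)%N -> Gam i \in unitmx,
   Rb j = (-1) ^+ j *: (V j.+1 *m Ph j) &
   Pb j = (-1) ^+ j *: (Q j.+1 *m Ph j)].

Lemma bcg_lanczos_inv0 : bcg_lanczos_inv 0.
Proof.
have eR : Rb 0 = (-1) ^+ 0 *: (V 1 *m Ph 0) by rewrite expr0 scale1r (lanczos_V1 LZ).
split => //.
- exact: (orthonormal_upto1 LZ).
- by move=> i /andP[i1 i0]; move: (leq_trans i1 i0).
- by move=> i; rewrite leqn0 => /eqP ->; apply: (bcgR_factor_unit (j:=0)) eR.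
- by rewrite conj_dir1 -eR.
Qed.

Lemma bcg_lanczos_inv_step j : (j < k)%N -> bcg_lanczos_inv j ->
  bcg_lanczos_inv j.+1 /\
  [/\ Ub j = invmx (Ph j) *m invmx (Dl j.+1) *m Ph j,
      Xb j.+1 = invmx ((Ph j)^T *m Ph j) *m ((Ph j.+1)^T *m Ph j.+1) &
      Ph j \in unitmx].
Proof.
move=> jk [o HD HG eR eP].
have jk' : (1 <= j.+1 <= k)%N by [].
have piv : pivots_sym_unit Gam Om j.+1 by move=> i /andP[i1 ij]; apply: HD; rewrite i1.
have Omsym i : (1 <= i <= j.+1)%N -> (Om i)^T = Om i.
  move=> /andP[i1 ij]; apply: (lanczos_Om_sym Asym LZ); first by rewrite i1 (leq_trans ij).
  exact: (orthonormal_upto_mono ij o).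
have sD := Delta_sym Gam Omsym.
have QAQ := conj_dir_energy Asym LZ jk' o piv.
have QV : (Q j.+1)^T *m V j.+1 = 1%:M by rewrite (conj_dir_orth Gam Om o) ?eqxx ?leqnn.
have uD : Dl j.+1 \in unitmx by rewrite -QAQ; exact: posdef_congr_unitmx QV.
have uF : Ph j \in unitmx by apply: (bcgR_factor_unit (ltnW jk)) eR.
have VV1 : (V j.+1)^T *m V j.+1 = 1%:M by rewrite (orthonormal_upto_eq o) ?leqnn.
have [eU eR1 eP1 eX] := bcg_lanczos_step eR eP uF uD QAQ VV1
  (lanczos_orthonormal LZ jk') (A_conj_dir LZ jk' piv).
have uG : Gam j.+1 \in unitmx.
  by move: (bcgR_factor_unit jk eR1); rewrite PhiS !unitmx_mul => /andP[/andP[]].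
split=> //; split => //.
- exact: (orthonormal_upto_step Asym LZ jk' o uG).
- move=> i /andP[i1]; rewrite leq_eqVlt => /orP[/eqP ->|ij] //.
  by apply: HD; rewrite i1.
- by move=> i; rewrite leq_eqVlt => /orP[/eqP ->|ij] //; exact: HG.
Qed.

Lemma bcg_lanczos_inv_all j : (j <= k)%N -> bcg_lanczos_inv j.
Proof.
elim: j => [|j IH] jk; first exact: bcg_lanczos_inv0.
by case: (bcg_lanczos_inv_step jk (IH (ltnW jk))).
Qed.

End BCGLanczos.

Lemma scalar_mx_block (R : pzRingType) m J (a : R) :
  (a%:M : 'M[R]_(\sum_(i < J) m)) =
  \mxblock_(i < J, j < J) (if i == j then (a%:M : 'M[R]_m) else 0).
Proof.
rewrite -(mxdiagZ (p_ := fun _ : 'I_J => m)) /mxdiag.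
by apply: eq_mxblock => i j; rewrite conform_mx_id.
Qed.

Lemma sum_ord_eq_nat (V : nmodType) J c (F : nat -> V) :
  \sum_(j < J) (if (j : nat) == c then F j else 0) = if (c < J)%N then F c else 0.
Proof.
rewrite -big_mkcond /=; case: ltnP => cJ; first by rewrite (big_pred1 (Ordinal cJ)).
by rewrite big_pred0 // => j; apply/negbTE; rewrite neq_ltn (leq_trans (ltn_ord j)).
Qed.

Section ShiftedTridiagonal.
Variables (R : realFieldType) (m : nat) (Gam Om : nat -> 'M[R]_m) (mu : R).

Definition Tshift_blk (i j : nat) : 'M[R]_m :=
  Tblk Gam Om i j - (if i == j then mu%:M else 0).

Lemma Tshift_mul_inv_block J (i l : 'I_J) :
  Tk Gam Om J - mu%:M \in unitmx ->
  \sum_(j < J) Tshift_blk i j *m submxblock (invmx (Tk Gam Om J - mu%:M)) j l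
  = if i == l then 1%:M else 0.
Proof.
set N := Tk Gam Om J - mu%:M => uN.
have NN : N *m invmx N = 1%:M by rewrite mulmxV.
have eN : N = \mxblock_(i < J, j < J) Tshift_blk i j.
  by rewrite /N /Tk scalar_mx_block mxblockB.
rewrite -[invmx N]submxblockK {1}eN mul_mxblock (scalar_mx_block m J 1) in NN.
by have := congr1 (fun M => submxblock M i l) NN; rewrite !mxblockK.
Qed.

Lemma Tshift_blk_mul i j (Y : 'M[R]_m) : Tshift_blk i j *m Y =
  (if j == i then (Om i.+1 - mu%:M) *m Y else 0)
  + ((if j == i.-1 then (if (0 < i)%N then Gam i *m Y else 0) else 0)
  + (if j == i.+1 then (Gam j)^T *m Y else 0)).
Proof.
rewrite /Tshift_blk /Tblk.
have [->|nji] := eqVneq j i.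
  rewrite (ltn_eqF (ltnSn i)) addr0.
  by case: i => [|i] /=; rewrite ?(gtn_eqF (ltnSn i)) !addr0.
rewrite subr0 add0r.
have [->|nij1] := eqVneq i j.+1.
  by rewrite eqxx /= (ltn_eqF (ltnW (ltnSn _))) addr0.
have -> : (if j == i.-1 then (if (0 < i)%N then Gam i *m Y else 0) else 0) = 0.
  case: eqP => [ej|] //; case: i nji nij1 ej => [|i] //= _ nij1 ej.
  by rewrite ej eqxx in nij1.
by rewrite add0r; case: eqP; rewrite ?mul0mx.
Qed.

Lemma Tshift_row_mul J (y : nat -> 'M[R]_m) (i : nat) : (i < J)%N ->
  \sum_(j < J) Tshift_blk i j *m y j =
  (if (0 < i)%N then Gam i *m y i.-1 else 0) + (Om i.+1 - mu%:M) *m y i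
  + (if (i.+1 < J)%N then (Gam i.+1)^T *m y i.+1 else 0).
Proof.
move=> iJ; under eq_bigr => j _ do rewrite Tshift_blk_mul.
rewrite !big_split /= (sum_ord_eq_nat J i (fun j => (Om i.+1 - mu%:M) *m y j)) iJ.
rewrite (sum_ord_eq_nat J i.+1 (fun j => (Gam j)^T *m y j)).
rewrite (sum_ord_eq_nat J i.-1 (fun j => if (0 < i)%N then Gam i *m y j else 0)).
case: i iJ => [|i] iJ /=; first by rewrite !if_same !add0r.
by rewrite (ltn_trans (ltnSn i) iJ) addrA [X in X + _]addrC.
Qed.

(* The paper's [overline{Delta}^{(mu)}_j]: the pivots of [T_j - mu I]. *)
Fixpoint DeltaSh j : 'M[R]_m :=
  match j with
  | 0 => 0
  | j'.+1 => if j' is 0 then Om 1 - mu%:M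
             else Om j - mu%:M - Gam j' *m invmx (DeltaSh j') *m (Gam j')^T
  end.

Lemma DeltaShS j :
  DeltaSh j.+2 = Om j.+2 - mu%:M - Gam j.+1 *m invmx (DeltaSh j.+1) *m (Gam j.+1)^T.
Proof. by []. Qed.

(* Forward elimination on the last block column [y] of [(T_{J+1} - mu I)^{-1}]. *)
Lemma tridiag_last_pivot J (y : nat -> 'M[R]_m) :
  (forall i, (1 <= i <= J)%N -> DeltaSh i \in unitmx) ->
  (forall i, (i < J.+1)%N ->
    (if (0 < i)%N then Gam i *m y i.-1 else 0) + (Om i.+1 - mu%:M) *m y i
    + (if (i.+1 < J.+1)%N then (Gam i.+1)^T *m y i.+1 else 0)
    = if i == J then 1%:M else 0) ->
  DeltaSh J.+1 *m y J = 1%:M.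
Proof.
move=> uD rows.
suff elim_row i : (i < J.+1)%N ->
    DeltaSh i.+1 *m y i + (if (i.+1 < J.+1)%N then (Gam i.+1)^T *m y i.+1 else 0)
    = if i == J then 1%:M else 0.
  by have := elim_row J (ltnSn _); rewrite ltnn eqxx addr0.
elim: i => [|i IH] iJ; first by rewrite -(rows 0%N iJ) add0r.
have := IH (ltnW iJ); rewrite iJ (ltn_eqF (iJ : (i < J)%N)) => e0.
have uDi : DeltaSh i.+1 \in unitmx by apply: uD; rewrite /= -ltnS.
have ey : y i = - (invmx (DeltaSh i.+1) *m ((Gam i.+1)^T *m y i.+1)).
  apply/eqP; rewrite -subr_eq0 opprK; apply/eqP.
  by rewrite -[y i](mulKmx uDi) -mulmxDr e0 mulmx0.
have := rows i.+1 iJ; rewrite [(0 < i.+1)%N]/= ey mulmxN !mulmxA => <-.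
by rewrite DeltaShS mulmxBl; congr (_ + _); rewrite addrC.
Qed.

Lemma Tshift_inv_last_block J :
  Tk Gam Om J.+1 - mu%:M \in unitmx ->
  (forall i, (1 <= i <= J)%N -> DeltaSh i \in unitmx) ->
  DeltaSh J.+1 \in unitmx /\
  submxblock (invmx (Tk Gam Om J.+1 - mu%:M)) ord_max ord_max = invmx (DeltaSh J.+1).
Proof.
move=> uN uD.
pose y i := submxblock (invmx (Tk Gam Om J.+1 - mu%:M)) (inord i : 'I_J.+1) ord_max.
have last_eq : DeltaSh J.+1 *m y J = 1%:M.
  apply: tridiag_last_pivot => // i iJ.
  have := Tshift_mul_inv_block (inord i) ord_max uN.
  under eq_bigr => j _ do rewrite -[j in submxblock _ j _]inord_val.
  rewrite inordK // -(Tshift_row_mul y iJ) => ->.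
  by rewrite -val_eqE /= inordK.
split; first by case: (mulmx1_unit last_eq).
rewrite (mulmx1_invmx last_eq) /y; congr submxblock.
by apply: val_inj; rewrite /= inordK.
Qed.

End ShiftedTridiagonal.

Section ShiftedPivots.
Variables (R : realFieldType) (m k : nat) (Gam Om : nat -> 'M[R]_m) (mu : R).
Hypothesis Tunit : forall j, (1 <= j <= k)%N -> Tk Gam Om j - mu%:M \in unitmx.

Local Notation DSh := (DeltaSh Gam Om mu).

Lemma DeltaSh_unit j : (1 <= j <= k)%N -> DSh j \in unitmx.
Proof.
suff upto J : (J <= k)%N -> forall i, (1 <= i <= J)%N -> DSh i \in unitmx.
  by move=> /andP[j1 jk]; apply: (upto k) => //; rewrite j1.
elim: J => [|J IH] Jk i /andP[i1]; first by rewrite leqn0 => /eqP i0; rewrite i0 in i1.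
rewrite leq_eqVlt => /orP[/eqP ->|iJ].
  by case: (Tshift_inv_last_block (Tunit (j:=J.+1) Jk) (IH (ltnW Jk))).
by apply: (IH (ltnW Jk)); rewrite i1.
Qed.

Lemma DeltaMuS j : (j < k)%N ->
  DeltaMu Gam Om mu j.+2 =
  mu%:M + Gam j.+1 *m (invmx (DSh j.+1) - invmx (Delta Gam Om j.+1)) *m (Gam j.+1)^T.
Proof.
move=> jk; rewrite /DeltaMu /OmMu.
have uDSh i : (1 <= i <= j)%N -> DSh i \in unitmx.
  by case/andP=> i1 ij; apply: DeltaSh_unit; rewrite i1 (leq_trans ij (ltnW jk)).
have [_ ->] := Tshift_inv_last_block (Tunit (j:=j.+1) jk) uDSh.
by rewrite mulmxBr mulmxBl addrA.
Qed.

Lemma DeltaSh_DeltaMu j : (1 <= j <= k)%N -> DSh j = Delta Gam Om j - DeltaMu Gam Om mu j.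
Proof.
case: j => [|[|j]] // /andP[_ jk].
rewrite DeltaShS DeltaS (DeltaMuS (ltnW jk)) mulmxBr mulmxBl.
by rewrite opprD addrA opprB addrA; congr (_ - _); rewrite addrAC subrK.
Qed.

End ShiftedPivots.

Lemma invmx_sub_shift (R : fieldType) m (D E Db : 'M[R]_m) :
  D \in unitmx -> E \in unitmx -> Db \in unitmx -> D = Db + E ->
  (invmx E - invmx D) *m D *m (invmx Db - invmx D) = invmx D.
Proof.
move=> uD uE uDb eD.
have ED : invmx E *m D *m invmx Db = invmx E + invmx Db.
  by rewrite eD mulmxDr mulmxDl mulmxK // mulVmx // mul1mx.
rewrite mulmxBl mulVmx // mulmxBl !mulmxBr ED mul1mx (mulmxK uD).
by rewrite mul1mx [invmx E + _]addrC addrK subKr.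
Qed.

(* Here [D], [E], [Db] stand for [Delta_k], [Delta^{(mu)}_k] and the shifted
   pivot of [T_k - mu I], [P], [P1] for [Phi_{k-1}], [Phi_k], [G] for
   [Gamma_k] and [DM1] for [Delta^{(mu)}_{k+1}]. *)
Section UpsMuRecurrence.
Variables (R : fieldType) (m : nat) (mu : R) (D E Db P P1 G DM1 : 'M[R]_m).
Hypotheses (uD : D \in unitmx) (uE : E \in unitmx) (uDb : Db \in unitmx).
Hypotheses (uP : P \in unitmx) (uP1 : P1 \in unitmx) (uDM1 : DM1 \in unitmx).
Hypothesis sD : D^T = D.
Hypothesis eDb : Db = D - E.
Hypothesis eP1 : P1 = G *m invmx D *m P.
Hypothesis eDM1 : DM1 = mu%:M + G *m (invmx Db - invmx D) *m G^T.

Let U := invmx P *m invmx E *m P - invmx P *m invmx D *m P.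
Let Xi := invmx (P^T *m P) *m (P1^T *m P1).
Let K := invmx P1 *m DM1 *m P1.

Lemma ups_mu_diffE : U = invmx P *m (invmx E - invmx D) *m P.
Proof. by rewrite /U mulmxBr mulmxBl. Qed.

Lemma ups_mu_diff_unit : U \in unitmx.
Proof.
rewrite ups_mu_diffE (_ : invmx E - invmx D = invmx E *m Db *m invmx D).
  by rewrite !unitmx_mul !unitmx_inv uP uE uDb uD.
by rewrite eDb mulmxBr mulmxBl mulVmx // mulmxK // mul1mx.
Qed.

Lemma Xi_Lanczos : Xi = invmx P *m invmx D *m G^T *m P1.
Proof.
have uPt : P^T \in unitmx by rewrite unitmx_tr.
rewrite /Xi invmxM // {1}eP1 !trmx_mul trmx_inv sD !mulmxA.
by rewrite (mulmxKV uPt).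
Qed.

Lemma ups_mu_factor : mu *: U + Xi = U *m K.
Proof.
have PG : invmx P1 *m G = invmx P *m D.
  have -> : G = P1 *m invmx P *m D by rewrite eP1 (mulmxK uP) (mulmxKV uD).
  by rewrite !mulmxA mulVmx // mul1mx.
have eK : K = mu%:M + invmx P1 *m G *m (invmx Db - invmx D) *m G^T *m P1.
  rewrite /K eDM1 mulmxDr mulmxDl mul_mx_scalar -scalemxAl mulVmx //.
  by rewrite scalemx1 !mulmxA.
have key : (invmx E - invmx D) *m D *m (invmx Db - invmx D) = invmx D.
  by apply: invmx_sub_shift => //; rewrite eDb subrK.
rewrite eK mulmxDr mul_mx_scalar Xi_Lanczos; congr (_ + _).
rewrite !mulmxA -(mulmxA U) PG ups_mu_diffE !mulmxA (mulmxK uP).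
by rewrite -[in LHS]key !mulmxA.
Qed.

Lemma ups_mu_recurrence :
  let M1 := mu *: U + Xi in
  let M2 := mu *: ((P^T *m P) *m (invmx P *m invmx E *m P)
                   - (P^T *m P) *m (invmx P *m invmx D *m P)) + P1^T *m P1 in
  [/\ M1 \in unitmx, M2 \in unitmx,
      invmx P1 *m invmx DM1 *m P1 = invmx M1 *m U &
      invmx P1 *m invmx DM1 *m P1 = invmx M2 *m ((P^T *m P) *m (invmx P *m invmx E *m P)
                   - (P^T *m P) *m (invmx P *m invmx D *m P))].
Proof.
move=> M1 M2.
have uU := ups_mu_diff_unit.
have uK : K \in unitmx by rewrite !unitmx_mul unitmx_inv uP1 uDM1.
have uPP : P^T *m P \in unitmx by rewrite unitmx_mul unitmx_tr uP.
have uM1 : M1 \in unitmx by rewrite /M1 ups_mu_factor unitmx_mul uU uK.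
have eM2 : M2 = (P^T *m P) *m M1.
  by rewrite /M2 /M1 /Xi mulmxDr -scalemxAr (mulmxA (P^T *m P) (invmx (P^T *m P))) mulmxV // mul1mx mulmxBr.
have eUM : invmx P1 *m invmx DM1 *m P1 = invmx M1 *m U.
  rewrite /M1 ups_mu_factor invmxM // (mulmxKV uU) /K.
  by rewrite !invmxM ?unitmx_mul ?unitmx_inv ?uP1 ?uDM1 // invmxK mulmxA.
split => //; first by rewrite eM2 unitmx_mul uPP uM1.
by rewrite eM2 -mulmxBr invmxM // -[in RHS]mulmxA (mulKmx uPP).
Qed.

End UpsMuRecurrence.

Theorem theorem5 (R : realFieldType) (n m k : nat)
  (A : 'M[R]_n) (B X0 : 'M[R]_(n, m))
  (V : nat -> 'M[R]_(n, m)) (Gam Om : nat -> 'M[R]_m) (mu : R) :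
  (1 <= k)%N ->
  sym_posdef A ->
  (* block Lanczos started from R_0 = B - A X_0 *)
  lanczos_upto A V Gam Om (bcgR A B X0 0) k ->
  (* standing assumption: the block Krylov spaces have full dimension *)
  (forall j, (j <= k.+1)%N -> \rank (krylov A (bcgR A B X0 0) j) = (j * m)%N) ->
  (* R_0, ..., R_k have full column rank *)
  (forall j, (j <= k)%N -> \rank (bcgR A B X0 j) = m) ->
  (* mu is not an eigenvalue of T_1, ..., T_k *)
  (forall j, (1 <= j <= k)%N -> ~~ eigenvalue (Tk Gam Om j) mu) ->
  (* Delta^{(mu)}_1, ..., Delta^{(mu)}_{k+1} are nonsingular *)
  (forall j, (1 <= j <= k.+1)%N -> DeltaMu Gam Om mu j \in unitmx) ->
  let UM := UpsMu Gam Om mu in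
  let TM := ThetaMu A B X0 Gam Om mu in
  let M1 := mu *: (UM k.-1 - bcgUps A B X0 k.-1) + bcgXi A B X0 k in
  let M2 := mu *: (TM k.-1 - bcgTheta A B X0 k.-1)
            + (bcgR A B X0 k)^T *m bcgR A B X0 k in
  [/\ UM 0%N = mu^-1%:M,
      M1 \in unitmx, M2 \in unitmx,
      UM k = invmx M1 *m (UM k.-1 - bcgUps A B X0 k.-1) &
      UM k = invmx M2 *m (TM k.-1 - bcgTheta A B X0 k.-1)].
Proof.
move=> k_gt0 [Asym Apd] LZ _ Rrank noeig DMunit.
have Tunit j : (1 <= j <= k)%N -> Tk Gam Om j - mu%:M \in unitmx.
  by move/noeig/noneigen_unitmx.
case: k k_gt0 LZ Rrank Tunit DMunit {noeig} => [|k] // _ LZ Rrank Tunit DMunit.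
have inv_k := bcg_lanczos_inv_all Asym Apd Rrank LZ (leqnSn k).
have [_ _ uGam eR _] := inv_k.
have [[o piv _ eR1 _] [eU eX uP]] := bcg_lanczos_inv_step Asym Apd Rrank LZ (ltnSn k) inv_k.
have uP1 := bcgR_factor_unit Rrank (leqnn _) eR1.
have [sD uD] := piv k.+1 (leqnn _).
have uDSh := DeltaSh_unit Tunit (j:=k.+1) (leqnn _).
have [uM1 uM2 eUM1 eUM2] := ups_mu_recurrence uD (DMunit k.+1 (leqnSn _)) uDSh uP uP1
  (DMunit k.+2 (leqnn _)) sD (DeltaSh_DeltaMu Tunit (j:=k.+1) (leqnn _)) (PhiS _ _ k)
  (DeltaMuS Tunit (ltnSn k)).
have gram_k := bcgR_gram (orthonormal_upto_eq o (j:=k.+1) (leqW (leqnn _))) eR.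
have gram_k1 := bcgR_gram (orthonormal_upto_eq o (j:=k.+2) (leqnn _)) eR1.
rewrite /ThetaMu /bcgTheta eU eX gram_k gram_k1; split => //.
by rewrite /UpsMu invmx_scalar mul_mx_scalar -scalemxAl mulVmx ?scalemx1 ?uGam.
Qed.
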